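(* For a dcpo $X$, let $\wp(X)=\mathbf{DcPA}(\mathbf{Dcpo}(X,3),3)$ be the set of maps of directed complete Plotkin algebras from $\mathbf{Dcpo}(X,3)$ (with pointwise structure) to $3$. Then $$\wp(X)\cong\{(f_1,f_2): f_1\in\mathbf{CL}_{\vee,1}(\mathcal{O}(X),2),\ f_2\in\mathbf{PreFrm}_0(\mathcal{O}(X),2),\ f_1\ge f_2\}.$$
   Context: $3=\{0,\bowtie,1\}$ with $0\le\bowtie\le 1$, a Plotkin algebra with $a\amalg b=0$ if $a=b=0$, $=1$ if $a=b=1$, and $=\bowtie$ otherwise. $\mathbf{DcPA}$ is the category of directed complete Plotkin algebras (dcpos with least/greatest elements $0,1$, a Scott continuous idempotent commutative associative monotone operation $\amalg$ and an absorbing element $\bowtie$), with Scott continuous maps preserving $\amalg,\bowtie,0,1$. $\mathcal{O}(X)$ is the frame of Scott open subsets of $X$. $\mathbf{CL}_{\vee,1}$: complete lattices with maps preserving all joins and top. $\mathbf{PreFrm}_0$: preframes with bottom (dcpos with finite meets, binary meet Scott continuous) and Scott continuous maps preserving finite meets and bottom. $2=\{0<1\}$; $f_1\ge f_2$ pointwise. *)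

Definition is_ub {T : Type} (le : T -> T -> Prop) (D : T -> Prop) (s : T) : Prop :=
  forall d, D d -> le d s.

Definition is_sup {T : Type} (le : T -> T -> Prop) (D : T -> Prop) (s : T) : Prop :=
  is_ub le D s /\ forall u, is_ub le D u -> le s u.

Definition directed {T : Type} (le : T -> T -> Prop) (D : T -> Prop) : Prop :=
  (exists d, D d) /\
  forall a b, D a -> D b -> exists c, D c /\ le a c /\ le b c.

Definition monotone {S T : Type} (leS : S -> S -> Prop) (leT : T -> T -> Prop)
  (f : S -> T) : Prop := forall a b, leS a b -> leT (f a) (f b).

Definition scott_continuous {S T : Type} (leS : S -> S -> Prop) (leT : T -> T -> Prop)
  (f : S -> T) : Prop :=
  monotone leS leT f /\
  forall (D : S -> Prop) (s : S), directed leS D -> is_sup leS D s ->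
    is_sup leT (fun t => exists d, D d /\ f d = t) (f s).

Record dcpo := Dcpo {
  carrier :> Type;
  dle : carrier -> carrier -> Prop;
  dle_refl : forall x, dle x x;
  dle_trans : forall x y z, dle x y -> dle y z -> dle x z;
  dle_antisym : forall x y, dle x y -> dle y x -> x = y;
  dcomplete : forall D : carrier -> Prop, directed dle D -> exists s, is_sup dle D s
}.

Inductive three : Type := T0 | Tb | T1.

Definition le3 (a b : three) : Prop :=
  match a, b with
  | T0, _ => True
  | Tb, (Tb | T1) => True
  | T1, T1 => True
  | _, _ => False
  end.

Definition amalg3 (a b : three) : three :=
  match a, b with
  | T0, T0 => T0
  | T1, T1 => T1
  | _, _ => Tb
  end.

Definition C3 (X : dcpo) : Type := { g : X -> three | scott_continuous (@dle X) le3 g }.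

Definition C3le {X : dcpo} (g h : C3 X) : Prop :=
  forall x, le3 (proj1_sig g x) (proj1_sig h x).

(* DcPA morphisms Dcpo(X,3) -> 3: Scott continuous, preserving the pointwise
   amalg, the absorbing element bowtie, and 0, 1 (constant maps). *)
Definition dcpa_hom (X : dcpo) (phi : C3 X -> three) : Prop :=
  scott_continuous (@C3le X) le3 phi /\
  (forall g h k : C3 X,
     (forall x, proj1_sig k x = amalg3 (proj1_sig g x) (proj1_sig h x)) ->
     phi k = amalg3 (phi g) (phi h)) /\
  (forall k : C3 X, (forall x, proj1_sig k x = Tb) -> phi k = Tb) /\
  (forall k : C3 X, (forall x, proj1_sig k x = T0) -> phi k = T0) /\
  (forall k : C3 X, (forall x, proj1_sig k x = T1) -> phi k = T1).

Definition wp (X : dcpo) : Type := { phi : C3 X -> three | dcpa_hom X phi }.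

Definition scott_open (X : dcpo) (U : X -> Prop) : Prop :=
  (forall x y, U x -> dle X x y -> U y) /\
  (forall (D : X -> Prop) (s : X), directed (@dle X) D -> is_sup (@dle X) D s ->
     U s -> exists d, D d /\ U d).

Definition OX (X : dcpo) : Type := { U : X -> Prop | scott_open X U }.

Definition Ole {X : dcpo} (U V : OX X) : Prop :=
  forall x, proj1_sig U x -> proj1_sig V x.

Definition le2 (a b : bool) : Prop := a = true -> b = true.

Definition CL_join_top (X : dcpo) (f : OX X -> bool) : Prop :=
  (forall (S : OX X -> Prop) (W : OX X),
     (forall x, proj1_sig W x <-> exists U, S U /\ proj1_sig U x) ->
     (f W = true <-> exists U, S U /\ f U = true)) /\
  (forall W : OX X, (forall x, proj1_sig W x) -> f W = true).

Definition preframe0_hom (X : dcpo) (f : OX X -> bool) : Prop :=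
  scott_continuous (@Ole X) le2 f /\
  (forall U V W : OX X,
     (forall x, proj1_sig W x <-> (proj1_sig U x /\ proj1_sig V x)) ->
     f W = andb (f U) (f V)) /\
  (forall W : OX X, (forall x, proj1_sig W x) -> f W = true) /\
  (forall W : OX X, (forall x, ~ proj1_sig W x) -> f W = false).

Definition pairs (X : dcpo) : Type :=
  { p : (OX X -> bool) * (OX X -> bool) |
      CL_join_top X (fst p) /\ preframe0_hom X (snd p) /\
      forall U, le2 (snd p U) (fst p U) }.

From Stdlib Require Import Classical ClassicalEpsilon FunctionalExtensionality PropExtensionality ProofIrrelevance Bool.

(* A Scott continuous map g : X -> 3 amounts to the pair of Scott opens
   open2 g ⊆ open1 g where g ≥ ⋈, resp. g = 1, and pointwise
   g = χ(open1 g) ⨿ χ(open2 g).  Reading 3 in these level coordinates, ⨿ becomes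
   (∨, ∧), so a DcPA map φ is determined by f1 U := [φ χ(U) ≥ ⋈] and
   f2 U := [φ χ(U) = 1] through φ g = (f1 (open1 g), f2 (open2 g)).  Preservation
   of ⨿ says f1 preserves binary unions and f2 binary meets; Scott continuity of φ
   makes f2 Scott continuous and, applied to the directed family of opens below a
   union on which f1 vanishes, makes f1 preserve all unions.  Conversely the same
   formula turns every such pair into a DcPA map. *)

Lemma sig_eq {A : Type} {P : A -> Prop} (u v : sig P) : proj1_sig u = proj1_sig v -> u = v.
Proof. apply eq_sig_hprop. intros. apply proof_irrelevance. Qed.

Definition image {S T : Type} (f : S -> T) (D : S -> Prop) : T -> Prop :=
  fun t => exists d, D d /\ f d = t.

Lemma directed_image {S T : Type} (leS : S -> S -> Prop) (leT : T -> T -> Prop)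
  (f : S -> T) (D : S -> Prop) :
  monotone leS leT f -> directed leS D -> directed leT (image f D).
Proof.
  intros hf [[d hd] hup]. split.
  - exists (f d), d. auto.
  - intros a b [x [hx <-]] [y [hy <-]].
    destruct (hup x y hx hy) as [z [hz [hxz hyz]]].
    exists (f z). split; [exists z; auto | auto].
Qed.

Lemma is_sup_two (S : bool -> Prop) (s : bool) : is_sup le2 S s <-> (s = true <-> S true).
Proof.
  unfold is_sup, is_ub, le2. split.
  - intros [hub hleast]. split.
    + intro hs. apply NNPP. intro hn. apply Bool.diff_false_true, (hleast false); [|exact hs].
      intros [|] ht; [contradiction | auto].
    + intro ht. exact (hub true ht eq_refl).
  - intros hs. split.
    + intros d hd ->. apply hs, hd.
    + intros u hu h. apply (hu true), eq_refl. apply hs, h.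
Qed.

Definition lev1 (a : three) : bool := match a with T0 => false | _ => true end.
Definition lev2 (a : three) : bool := match a with T1 => true | _ => false end.
Definition of_levels (b1 b2 : bool) : three := if b2 then T1 else if b1 then Tb else T0.

Lemma lev2_lev1 a : lev2 a = true -> lev1 a = true.
Proof. destruct a; simpl; congruence. Qed.

Lemma of_levelsK a : of_levels (lev1 a) (lev2 a) = a.
Proof. destruct a; reflexivity. Qed.

Lemma three_eq_levels a b : lev1 a = lev1 b -> lev2 a = lev2 b -> a = b.
Proof. destruct a, b; simpl; congruence. Qed.

Lemma lev1_of_levels b1 b2 : lev1 (of_levels b1 b2) = b1 || b2.
Proof. destruct b1, b2; reflexivity. Qed.

Lemma lev2_of_levels b1 b2 : lev2 (of_levels b1 b2) = b2.
Proof. destruct b1, b2; reflexivity. Qed.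

Lemma lev1_amalg a b : lev1 (amalg3 a b) = lev1 a || lev1 b.
Proof. destruct a, b; reflexivity. Qed.

Lemma lev2_amalg a b : lev2 (amalg3 a b) = lev2 a && lev2 b.
Proof. destruct a, b; reflexivity. Qed.

Lemma le3_levels a b : le3 a b <-> le2 (lev1 a) (lev1 b) /\ le2 (lev2 a) (lev2 b).
Proof. unfold le2; destruct a, b; simpl; intuition congruence. Qed.

Lemma is_sup_three (S : three -> Prop) (s : three) :
  is_sup le3 S s <->
  (lev1 s = true <-> exists t, S t /\ lev1 t = true) /\
  (lev2 s = true <-> exists t, S t /\ lev2 t = true).
Proof.
  split.
  - intros [hub hleast].
    assert (below : forall t, S t -> le2 (lev1 t) (lev1 s) /\ le2 (lev2 t) (lev2 s))
      by (intros t ht; apply le3_levels, hub, ht).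
    split; split; try (intros [t [ht h]]; apply (below t ht), h).
    + intro hs. apply NNPP. intro hn.
      enough (le3 s T0) by (destruct s; simpl in *; congruence).
      apply hleast. intros [| |] ht; simpl; auto; exfalso; apply hn; eauto.
    + intro hs. apply NNPP. intro hn.
      enough (le3 s Tb) by (destruct s; simpl in *; congruence).
      apply hleast. intros [| |] ht; simpl; auto; exfalso; apply hn; eauto.
  - intros [h1 h2]. split.
    + intros t ht. apply le3_levels. split; intro h; [apply h1 | apply h2]; eauto.
    + intros u hu. apply le3_levels. split; intro h.
      * destruct (proj1 h1 h) as [t [ht e]]. exact (proj1 (proj1 (le3_levels t u) (hu t ht)) e).
      * destruct (proj1 h2 h) as [t [ht e]]. exact (proj2 (proj1 (le3_levels t u) (hu t ht)) e).
Qed.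

Section ScottOpens.
Context {X : dcpo}.

Lemma scott_continuous_three (g : X -> three) :
  scott_continuous (@dle X) le3 g <->
  scott_open X (fun x => lev1 (g x) = true) /\ scott_open X (fun x => lev2 (g x) = true).
Proof.
  split.
  - intros [hm hc].
    assert (hup : forall x y, dle X x y ->
                  le2 (lev1 (g x)) (lev1 (g y)) /\ le2 (lev2 (g x)) (lev2 (g y)))
      by (intros x y hxy; apply le3_levels, hm, hxy).
    split; split.
    + intros x y hx hxy. apply (hup x y hxy), hx.
    + intros D s hD hs h.
      destruct (proj1 (proj1 (proj1 (is_sup_three _ _) (hc D s hD hs))) h) as [t [[d [hd <-]] ht]].
      eauto.
    + intros x y hx hxy. apply (hup x y hxy), hx.
    + intros D s hD hs h.
      destruct (proj1 (proj2 (proj1 (is_sup_three _ _) (hc D s hD hs))) h) as [t [[d [hd <-]] ht]].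
      eauto.
  - intros [[u1 i1] [u2 i2]].
    assert (hm : monotone (@dle X) le3 g)
      by (intros x y hxy; apply le3_levels; split; intro h; eauto).
    split; [exact hm |]. intros D s hD hs. apply is_sup_three. split; split.
    + intro h. destruct (i1 D s hD hs h) as [d [hd e]]. exists (g d). split; [exists d |]; auto.
    + intros [t [[d [hd <-]] e]]. exact (u1 d s e (proj1 hs d hd)).
    + intro h. destruct (i2 D s hD hs h) as [d [hd e]]. exists (g d). split; [exists d |]; auto.
    + intros [t [[d [hd <-]] e]]. exact (u2 d s e (proj1 hs d hd)).
Qed.

Lemma scott_open_ext (P Q : X -> Prop) :
  (forall x, P x <-> Q x) -> scott_open X P -> scott_open X Q.
Proof.
  intros e [up inacc]. split.
  - intros x y hx hxy. apply e, (up x y); [apply e |]; assumption.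
  - intros D s hD hs hq. destruct (inacc D s hD hs (proj2 (e s) hq)) as [d [hd hp]].
    exists d. split; [| apply e]; assumption.
Qed.

Lemma OX_ext (U V : OX X) : (forall x, proj1_sig U x <-> proj1_sig V x) -> U = V.
Proof.
  intro e. apply sig_eq, functional_extensionality. intro x.
  apply propositional_extensionality, e.
Qed.

Lemma Ole_antisym (U V : OX X) : Ole U V -> Ole V U -> U = V.
Proof. intros hUV hVU. apply OX_ext. split; auto. Qed.

Lemma bigcup_open (S : OX X -> Prop) :
  scott_open X (fun x => exists U, S U /\ proj1_sig U x).
Proof.
  split.
  - intros x y [U [hU hx]] hxy. exists U. split; [exact hU |].
    exact (proj1 (proj2_sig U) x y hx hxy).
  - intros D s hD hs [U [hU hx]].
    destruct (proj2 (proj2_sig U) D s hD hs hx) as [d [hd e]]. eauto.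
Qed.

Definition bigcup (S : OX X -> Prop) : OX X := exist _ _ (bigcup_open S).

Lemma Ole_bigcup (S : OX X -> Prop) (U : OX X) : S U -> Ole U (bigcup S).
Proof. intros hU x hx. exists U. auto. Qed.

Lemma bigcup_least (S : OX X -> Prop) (W : OX X) :
  is_ub (@Ole X) S W -> Ole (bigcup S) W.
Proof. intros hW x [U [hU hx]]. exact (hW U hU x hx). Qed.

Lemma is_sup_Ole (S : OX X -> Prop) (W : OX X) : is_sup (@Ole X) S W <-> W = bigcup S.
Proof.
  split.
  - intros [hub hleast]. apply Ole_antisym; [apply hleast; intros U; apply Ole_bigcup |].
    apply bigcup_least, hub.
  - intros ->. split; [intros U; apply Ole_bigcup | intros u; apply bigcup_least].
Qed.

Definition OX_union (U V : OX X) : OX X := bigcup (fun Z => Z = U \/ Z = V).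
Definition OX_empty : OX X := bigcup (fun _ => False).

Lemma OX_union_spec (U V : OX X) x :
  proj1_sig (OX_union U V) x <-> proj1_sig U x \/ proj1_sig V x.
Proof.
  split.
  - intros [Z [[-> | ->] hx]]; auto.
  - intros [hx | hx]; eexists; eauto.
Qed.

Lemma OX_empty_spec x : ~ proj1_sig OX_empty x.
Proof. intros [_ [[] _]]. Qed.

Lemma inter_open (U V : OX X) : scott_open X (fun x => proj1_sig U x /\ proj1_sig V x).
Proof.
  destruct U as [U [upU inU]], V as [V [upV inV]]. simpl. split.
  - intros x y [hU hV] hxy. split; [exact (upU x y hU hxy) | exact (upV x y hV hxy)].
  - intros D s hD hs [hU hV].
    destruct (inU D s hD hs hU) as [d1 [hd1 e1]], (inV D s hD hs hV) as [d2 [hd2 e2]].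
    destruct (proj2 hD d1 d2 hd1 hd2) as [c [hc [l1 l2]]].
    exists c. split; [exact hc | split; [exact (upU _ _ e1 l1) | exact (upV _ _ e2 l2)]].
Qed.

Definition OX_inter (U V : OX X) : OX X := exist _ _ (inter_open U V).

Lemma Ole_inter_union (U V : OX X) : Ole (OX_inter U V) (OX_union U V).
Proof. intros x [hx _]. apply OX_union_spec. auto. Qed.

Definition open1 (g : C3 X) : OX X :=
  exist _ (fun x => lev1 (proj1_sig g x) = true) (proj1 (proj1 (scott_continuous_three _) (proj2_sig g))).
Definition open2 (g : C3 X) : OX X :=
  exist _ (fun x => lev2 (proj1_sig g x) = true) (proj2 (proj1 (scott_continuous_three _) (proj2_sig g))).

Lemma Ole_open2_open1 (g : C3 X) : Ole (open2 g) (open1 g).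
Proof. intros x. apply lev2_lev1. Qed.

Lemma C3le_opens (g h : C3 X) :
  C3le g h <-> Ole (open1 g) (open1 h) /\ Ole (open2 g) (open2 h).
Proof.
  split.
  - intro hle. split; intro x; apply (le3_levels _ _), hle.
  - intros [h1 h2] x. apply le3_levels. split; [exact (h1 x) | exact (h2 x)].
Qed.

Definition ind (P : Prop) : bool := if excluded_middle_informative P then true else false.

Lemma ind_true (P : Prop) : ind P = true <-> P.
Proof. unfold ind. destruct (excluded_middle_informative P); intuition congruence. Qed.

(* Value 1 on V, bowtie on U \ V and 0 elsewhere; [ind] uses choice since opens are Prop-valued. *)
Definition of_opens_fun (U V : OX X) (x : X) : three :=
  of_levels (ind (proj1_sig U x)) (ind (proj1_sig V x)).

Section OfOpens.
Variables (U V : OX X).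
Hypothesis hVU : Ole V U.

Lemma lev1_of_opens_fun x : lev1 (of_opens_fun U V x) = true <-> proj1_sig U x.
Proof.
  unfold of_opens_fun. rewrite lev1_of_levels, orb_true_iff, !ind_true.
  split; [intros [h | h] | ]; auto.
Qed.

Lemma lev2_of_opens_fun x : lev2 (of_opens_fun U V x) = true <-> proj1_sig V x.
Proof. unfold of_opens_fun. rewrite lev2_of_levels. apply ind_true. Qed.

Lemma of_opens_continuous : scott_continuous (@dle X) le3 (of_opens_fun U V).
Proof.
  apply scott_continuous_three. split.
  - apply (scott_open_ext (proj1_sig U)); [intro x; symmetry; apply lev1_of_opens_fun |].
    exact (proj2_sig U).
  - apply (scott_open_ext (proj1_sig V)); [intro x; symmetry; apply lev2_of_opens_fun |].
    exact (proj2_sig V).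
Qed.

Definition of_opens : C3 X := exist _ _ of_opens_continuous.

Lemma lev1_of_opens x : lev1 (proj1_sig of_opens x) = true <-> proj1_sig U x.
Proof. exact (lev1_of_opens_fun x). Qed.

Lemma lev2_of_opens x : lev2 (proj1_sig of_opens x) = true <-> proj1_sig V x.
Proof. exact (lev2_of_opens_fun x). Qed.

Lemma open1_of_opens : open1 of_opens = U.
Proof. apply OX_ext, lev1_of_opens. Qed.

Lemma open2_of_opens : open2 of_opens = V.
Proof. apply OX_ext, lev2_of_opens. Qed.

End OfOpens.

Definition chi (U : OX X) : C3 X := of_opens U U (fun _ h => h).

Lemma lev1_chi (U : OX X) x : lev1 (proj1_sig (chi U) x) = true <-> proj1_sig U x.
Proof. apply lev1_of_opens. Qed.

Lemma lev2_chi (U : OX X) x : lev2 (proj1_sig (chi U) x) = true <-> proj1_sig U x.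
Proof. apply lev2_of_opens. Qed.

Lemma open1_chi (U : OX X) : open1 (chi U) = U.
Proof. apply open1_of_opens. Qed.

Lemma open2_chi (U : OX X) : open2 (chi U) = U.
Proof. apply open2_of_opens. Qed.

Lemma chi_mono : monotone (@Ole X) (@C3le X) chi.
Proof. intros U V hUV. apply C3le_opens. rewrite !open1_chi, !open2_chi. auto. Qed.

Lemma is_sup_C3_opens (D : C3 X -> Prop) (s : C3 X) :
  is_sup (@C3le X) D s -> open1 s = bigcup (image open1 D) /\ open2 s = bigcup (image open2 D).
Proof.
  intros [hub hleast].
  assert (hsub : Ole (bigcup (image open2 D)) (bigcup (image open1 D))).
  { intros x [U [[d [hd <-]] hx]]. exists (open1 d). split; [exists d; auto | apply Ole_open2_open1, hx]. }
  assert (hle : C3le s (of_opens _ _ hsub)).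
  { apply hleast. intros d hd. apply C3le_opens. rewrite open1_of_opens, open2_of_opens.
    split; apply Ole_bigcup; exists d; auto. }
  apply C3le_opens in hle. rewrite open1_of_opens, open2_of_opens in hle.
  split; apply Ole_antisym; try apply hle; apply bigcup_least; intros U [d [hd <-]];
    apply (C3le_opens d s), hub, hd.
Qed.

Lemma is_sup_chi (S : OX X -> Prop) (W : OX X) :
  is_sup (@Ole X) S W -> is_sup (@C3le X) (image chi S) (chi W).
Proof.
  intros hW. split.
  - intros c [U [hU <-]]. apply chi_mono, (proj1 hW), hU.
  - intros u hu. apply is_sup_Ole in hW. subst W.
    apply C3le_opens. rewrite open1_chi, open2_chi.
    split; apply bigcup_least; intros U hU;
      destruct (proj1 (C3le_opens (chi U) u) (hu (chi U) (ex_intro _ U (conj hU eq_refl))));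
      rewrite ?open1_chi, ?open2_chi in *; assumption.
Qed.

Lemma chi_full (U : OX X) : (forall x, proj1_sig U x) -> forall x, proj1_sig (chi U) x = T1.
Proof.
  intros hU x. unfold chi, of_opens, of_opens_fun. simpl.
  rewrite (proj2 (ind_true _) (hU x)). reflexivity.
Qed.

Lemma chi_empty (U : OX X) : (forall x, ~ proj1_sig U x) -> forall x, proj1_sig (chi U) x = T0.
Proof.
  intros hU x. unfold chi, of_opens, of_opens_fun. simpl.
  destruct (ind (proj1_sig U x)) eqn:e; [exfalso; apply (hU x), ind_true, e | reflexivity].
Qed.

Lemma C3_amalg_chi (g : C3 X) :
  forall x, proj1_sig g x = amalg3 (proj1_sig (chi (open1 g)) x) (proj1_sig (chi (open2 g)) x).
Proof.
  intro x. apply three_eq_levels; apply eq_iff_eq_true.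
  - rewrite lev1_amalg, orb_true_iff, !lev1_chi. simpl.
    split; [auto | intros [h | h]; [| apply lev2_lev1]; exact h].
  - rewrite lev2_amalg, andb_true_iff, !lev2_chi. simpl.
    split; [intro h; split; [apply lev2_lev1 |] | intros [_ h]]; exact h.
Qed.

End ScottOpens.

Section ToPairs.
Variables (X : dcpo) (phi : C3 X -> three).
Hypothesis hphi : dcpa_hom X phi.

Definition f1 (U : OX X) : bool := lev1 (phi (chi U)).
Definition f2 (U : OX X) : bool := lev2 (phi (chi U)).

Lemma f2_le_f1 U : le2 (f2 U) (f1 U).
Proof. intro h. apply lev2_lev1, h. Qed.

Lemma f1_f2_mono U V : Ole U V -> le2 (f1 U) (f1 V) /\ le2 (f2 U) (f2 V).
Proof. intro hUV. apply le3_levels, (proj1 (proj1 hphi)), chi_mono, hUV. Qed.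

Lemma phi_amalg_chi (U V : OX X) :
  phi (of_opens _ _ (Ole_inter_union U V)) = amalg3 (phi (chi U)) (phi (chi V)).
Proof.
  apply hphi. intro x. apply three_eq_levels.
  - apply eq_iff_eq_true. rewrite lev1_amalg, orb_true_iff.
    rewrite lev1_of_opens, OX_union_spec, !lev1_chi. reflexivity.
  - apply eq_iff_eq_true. rewrite lev2_amalg, andb_true_iff.
    rewrite lev2_of_opens, !lev2_chi. reflexivity.
Qed.

Lemma dcpa_hom_levels (g : C3 X) : lev1 (phi g) = f1 (open1 g) /\ lev2 (phi g) = f2 (open2 g).
Proof.
  rewrite (proj1 (proj2 hphi) _ _ g (C3_amalg_chi g)), lev1_amalg, lev2_amalg.
  destruct (f1_f2_mono _ _ (Ole_open2_open1 g)) as [h1 h2]. unfold f1, f2, le2 in *.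
  split; [destruct (lev1 (phi (chi (open1 g)))), (lev1 (phi (chi (open2 g))))
         |destruct (lev2 (phi (chi (open1 g)))), (lev2 (phi (chi (open2 g))))];
    simpl; intuition congruence.
Qed.

Lemma f1_union (U V : OX X) : f1 (OX_union U V) = f1 U || f1 V.
Proof.
  assert (e := proj1 (dcpa_hom_levels (of_opens _ _ (Ole_inter_union U V)))).
  rewrite open1_of_opens, phi_amalg_chi, lev1_amalg in e. symmetry. exact e.
Qed.

Lemma f2_inter (U V : OX X) : f2 (OX_inter U V) = f2 U && f2 V.
Proof.
  assert (e := proj2 (dcpa_hom_levels (of_opens _ _ (Ole_inter_union U V)))).
  rewrite open2_of_opens, phi_amalg_chi, lev2_amalg in e. symmetry. exact e.
Qed.

Lemma phi_chi_empty (W : OX X) : (forall x, ~ proj1_sig W x) -> phi (chi W) = T0.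
Proof. intro hW. apply hphi, chi_empty, hW. Qed.

Lemma phi_chi_full (W : OX X) : (forall x, proj1_sig W x) -> phi (chi W) = T1.
Proof. intro hW. apply hphi, chi_full, hW. Qed.

Lemma f1_join_top : CL_join_top X f1.
Proof.
  split; [| intros W hW; unfold f1; rewrite phi_chi_full; auto].
  intros S W hW. rewrite (OX_ext W (bigcup S) hW). clear W hW. split.
  - intro h1. apply NNPP. intro hn.
    (* The opens below the union on which f1 vanishes are directed and exhaust it. *)
    set (L := fun V => Ole V (bigcup S) /\ f1 V = false).
    assert (hLdir : directed (@Ole X) L).
    { split.
      - exists OX_empty. split; [intros x hx; destruct (OX_empty_spec x hx) |].
        unfold f1. rewrite phi_chi_empty; [reflexivity | apply OX_empty_spec].
      - intros V1 V2 [s1 e1] [s2 e2]. exists (OX_union V1 V2). repeat split.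
        + intros x hx. apply OX_union_spec in hx. destruct hx; auto.
        + rewrite f1_union, e1, e2. reflexivity.
        + intros x hx. apply OX_union_spec. auto.
        + intros x hx. apply OX_union_spec. auto. }
    assert (hLsup : is_sup (@Ole X) L (bigcup S)).
    { apply is_sup_Ole, Ole_antisym; [| apply bigcup_least; intros V [hV _]; exact hV].
      intros x [U [hU hx]]. exists U. repeat split; [apply Ole_bigcup, hU | | exact hx].
      apply not_true_is_false. intro h. apply hn. eauto. }
    destruct (proj1 (is_sup_three _ _)
      (proj2 (proj1 hphi) _ _ (directed_image _ _ _ _ chi_mono hLdir) (is_sup_chi _ _ hLsup)))
      as [hlev1 _].
    destruct (proj1 hlev1 h1) as [t [[c [[V [[_ hV] <-]] <-]] ht]].
    unfold f1 in hV. congruence.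
  - intros [U [hU h]]. apply (f1_f2_mono U); [apply Ole_bigcup, hU | exact h].
Qed.

Lemma f2_preframe0 : preframe0_hom X f2.
Proof.
  split; [split; [intros U V h; apply f1_f2_mono, h |] | split; [| split]].
  - intros D s hD hs. apply is_sup_two.
    destruct (proj1 (is_sup_three _ _)
      (proj2 (proj1 hphi) _ _ (directed_image _ _ _ _ chi_mono hD) (is_sup_chi _ _ hs)))
      as [_ hlev2].
    unfold f2 at 1. rewrite hlev2. split.
    + intros [t [[c [[V [hV <-]] <-]] ht]]. exists V. auto.
    + intros [V [hV e]]. exists (phi (chi V)). split; [exists (chi V); split; [exists V |] |]; auto.
  - intros U V W hW. rewrite (OX_ext W (OX_inter U V) hW). apply f2_inter.
  - intros W hW. unfold f2. rewrite phi_chi_full; auto.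
  - intros W hW. unfold f2. rewrite phi_chi_empty; auto.
Qed.

End ToPairs.

Section OfPairs.
Variables (X : dcpo) (g1 g2 : OX X -> bool).
Hypotheses (hg1 : CL_join_top X g1) (hg2 : preframe0_hom X g2)
  (hg21 : forall U, le2 (g2 U) (g1 U)).

Definition phi_pair (g : C3 X) : three := of_levels (g1 (open1 g)) (g2 (open2 g)).

Lemma g1_bigcup (S : OX X -> Prop) : g1 (bigcup S) = true <-> exists U, S U /\ g1 U = true.
Proof. apply hg1. reflexivity. Qed.

Lemma g1_union (U V : OX X) : g1 (OX_union U V) = g1 U || g1 V.
Proof.
  apply eq_iff_eq_true. unfold OX_union. rewrite g1_bigcup, orb_true_iff.
  split; [intros [Z [[-> | ->] h]] | intros [h | h]]; eauto.
Qed.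

Lemma g1_mono : monotone (@Ole X) le2 g1.
Proof.
  intros U V hUV h.
  rewrite (OX_ext V (OX_union U V)), g1_union, h; [reflexivity |].
  intro x. rewrite OX_union_spec. split; [auto | intros [hx | hx]; auto].
Qed.

Lemma lev1_phi_pair (g : C3 X) : lev1 (phi_pair g) = g1 (open1 g).
Proof.
  unfold phi_pair. rewrite lev1_of_levels.
  destruct (g1 (open1 g)) eqn:e; [reflexivity |].
  apply not_true_is_false. intro h.
  rewrite (g1_mono _ _ (Ole_open2_open1 g) (hg21 _ h)) in e. discriminate.
Qed.

Lemma lev2_phi_pair (g : C3 X) : lev2 (phi_pair g) = g2 (open2 g).
Proof. apply lev2_of_levels. Qed.

Lemma phi_pair_mono : monotone (@C3le X) le3 phi_pair.
Proof.
  intros g h hgh. apply C3le_opens in hgh. apply le3_levels.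
  rewrite !lev1_phi_pair, !lev2_phi_pair.
  split; [apply g1_mono | apply hg2]; apply hgh.
Qed.

Lemma phi_pair_continuous : scott_continuous (@C3le X) le3 phi_pair.
Proof.
  split; [exact phi_pair_mono |]. intros D s hD hs.
  destruct (is_sup_C3_opens D s hs) as [e1 e2].
  assert (h2 : is_sup le2 (image g2 (image open2 D)) (g2 (open2 s))).
  { apply (proj2 (proj1 hg2)); [| apply is_sup_Ole, e2].
    apply (directed_image (@C3le X)); [| exact hD]. intros g h hgh. apply C3le_opens, hgh. }
  apply is_sup_two in h2.
  apply is_sup_three. rewrite lev1_phi_pair, lev2_phi_pair, e1, g1_bigcup, h2. split; split.
  - intros [U [[d [hd <-]] h]]. exists (phi_pair d). rewrite lev1_phi_pair. split; [exists d |]; auto.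
  - intros [t [[d [hd <-]] h]]. exists (open1 d). rewrite <- lev1_phi_pair. split; [exists d |]; auto.
  - intros [U [[d [hd <-]] h]]. exists (phi_pair d). rewrite lev2_phi_pair. split; [exists d |]; auto.
  - intros [t [[d [hd <-]] h]]. exists (open2 d). rewrite <- lev2_phi_pair. split; [exists d |]; auto.
Qed.

Lemma g1_bot (W : OX X) : (forall x, ~ proj1_sig W x) -> g1 W = false.
Proof.
  intro hW. apply not_true_is_false. intro h.
  assert (hW' : forall x, proj1_sig W x <-> exists U : OX X, False /\ proj1_sig U x)
    by (intro x; split; [intro hx; destruct (hW x hx) | intros [_ [[] _]]]).
  destruct (proj1 (proj1 hg1 _ W hW') h) as [_ [[] _]].
Qed.

Lemma phi_pair_dcpa_hom : dcpa_hom X phi_pair.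
Proof.
  split; [exact phi_pair_continuous |]. split; [| split; [| split]].
  - intros g h k hk. apply three_eq_levels.
    + rewrite lev1_amalg, !lev1_phi_pair, <- g1_union. f_equal. apply OX_ext. intro x.
      rewrite OX_union_spec. simpl. rewrite hk, lev1_amalg, orb_true_iff. reflexivity.
    + rewrite lev2_amalg, !lev2_phi_pair. apply hg2. intro x.
      simpl. rewrite hk, lev2_amalg, andb_true_iff. reflexivity.
  - intros k hk. apply three_eq_levels; rewrite ?lev1_phi_pair, ?lev2_phi_pair; simpl.
    + apply hg1. intro x. simpl. rewrite hk. reflexivity.
    + apply hg2. intro x. simpl. rewrite hk. discriminate.
  - intros k hk. apply three_eq_levels; rewrite ?lev1_phi_pair, ?lev2_phi_pair; simpl.
    + apply g1_bot. intro x. simpl. rewrite hk. discriminate.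
    + apply hg2. intro x. simpl. rewrite hk. discriminate.
  - intros k hk. apply three_eq_levels; rewrite ?lev1_phi_pair, ?lev2_phi_pair; simpl.
    + apply hg1. intro x. simpl. rewrite hk. reflexivity.
    + apply hg2. intro x. simpl. rewrite hk. reflexivity.
Qed.

End OfPairs.

Definition to_pairs {X : dcpo} (a : wp X) : pairs X :=
  exist _ (f1 X (proj1_sig a), f2 X (proj1_sig a))
    (conj (f1_join_top _ _ (proj2_sig a))
      (conj (f2_preframe0 _ _ (proj2_sig a)) (f2_le_f1 _ _))).

Definition of_pairs {X : dcpo} (b : pairs X) : wp X :=
  let '(conj hg1 (conj hg2 hg21)) := proj2_sig b in
  exist _ (phi_pair X (fst (proj1_sig b)) (snd (proj1_sig b)))
    (phi_pair_dcpa_hom _ _ _ hg1 hg2 hg21).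

Lemma of_to_pairs {X : dcpo} (a : wp X) : of_pairs (to_pairs a) = a.
Proof.
  destruct a as [phi hphi]. apply sig_eq, functional_extensionality. intro g. simpl.
  destruct (dcpa_hom_levels X phi hphi g) as [e1 e2].
  unfold phi_pair. rewrite <- e1, <- e2. apply of_levelsK.
Qed.

Lemma to_of_pairs {X : dcpo} (b : pairs X) : to_pairs (of_pairs b) = b.
Proof.
  destruct b as [[g1 g2] [hg1 [hg2 hg21]]]. apply sig_eq. simpl.
  unfold f1, f2. f_equal; apply functional_extensionality; intro U.
  - rewrite (lev1_phi_pair _ _ _ hg1 hg21), open1_chi. reflexivity.
  - rewrite lev2_phi_pair, open2_chi. reflexivity.
Qed.

Theorem mainTheorem14 (X : dcpo) :
  exists (F : wp X -> pairs X) (G : pairs X -> wp X),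
    (forall a, G (F a) = a) /\ (forall b, F (G b) = b).
Proof.
  exists to_pairs, of_pairs. split; [apply of_to_pairs | apply to_of_pairs].
Qed.
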